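(* Let $V$ be a real vector space of dimension $d$, and $G$ a group of affine-linear transformations of $V$ including all translations. Then for all $i,j\in\{0,\ldots,d\}$, $\lambda\in[0,\infty)$ and $x\in\mathcal{CB}(V,G)$, \[e_i(\rho_j(\lambda,x))=\rho_i(\lambda,e_j(x))=\begin{cases}\rho_i(\lambda,x)&\text{if }i=j,\\0&\text{if }i\neq j.\end{cases}\] In particular, $\rho_i$ takes values in $\mathcal{CB}_i(V,G)$.
   Context: $\mathcal{K}(V)$ is the set of nonempty compact convex subsets of $V$ with the Hausdorff metric topology. $\mathcal{CB}(V,G)$ is the quotient (with quotient topology) of the free Hausdorff topological abelian group $\mathbb{Z}\mathcal{K}(V)$ on $\mathcal{K}(V)$ (the Hausdorff topological abelian group with continuous map $X\mapsto[X]$ through which every continuous map from $\mathcal{K}(V)$ to a Hausdorff topological abelian group factors uniquely via a continuous homomorphism) by the closure of the subgroup generated by all $[B\cup C]-[B]-[C]+[B\cap C]$ ($B,C,B\cup C\in\mathcal{K}(V)$) and all $[X]-[gX]$ ($g\in G$); images are still written $[X]$. The dilation map $D$ is the unique continuous map $[0,\infty)\times\mathcal{CB}(V,G)\to\mathcal{CB}(V,G)$, homomorphism in its second variable, with $D(\lambda,[X])=[\lambda X]$. The dilation components are the uniquely determined continuous maps $\rho_0\colon\mathcal{CB}(V,G)\to\mathcal{CB}(V,G)$ and $\rho_1,\ldots,\rho_d\colon[0,\infty)\times\mathcal{CB}(V,G)\to\mathcal{CB}(V,G)$ with each $\rho_i(-,x)$ ($i\geqslant1$) a semigroup homomorphism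 on $([0,\infty),+)$ and $D(\lambda,x)=\rho_0(x)+\sum_{i=1}^d\rho_i(\lambda^i,x)$; by convention $\rho_0(\lambda,x)$ means $\rho_0(x)$. The idempotents are $e_0=\rho_0$, $e_i(x)=\rho_i(1,x)$ ($i\geqslant1$), and $\mathcal{CB}_i(V,G)=e_i(\mathcal{CB}(V,G))$. *)

From HB Require Import structures.
From mathcomp Require Import all_boot all_order all_algebra.
From mathcomp Require Import all_classical all_reals all_analysis.
Import Order.TTheory GRing.Theory Num.Theory numFieldNormedType.Exports.
Set Implicit Arguments.
Unset Strict Implicit.
Unset Printing Implicit Defensive.
Local Open Scope ring_scope.
Local Open Scope classical_set_scope.

(* The real vector space V of dimension d is modelled as 'rV[R]_d. *)

Definition kv (R : realType) (d : nat) (X : set 'rV[R]_d) : Prop :=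
  X !=set0 /\ @compact 'rV[R]_d X /\
  convex_set (X : set (convex_lmodType 'rV[R]_d)).

Definition hdist (R : realType) (d : nat) (X Y : set 'rV[R]_d) : R :=
  inf [set e : R | 0 <= e /\
        (forall x, X x -> exists2 y, Y y & `|x - y| <= e) /\
        (forall y, Y y -> exists2 x, X x & `|x - y| <= e)].

Definition kcont (R : realType) (d : nat) (T : topologicalType)
    (f : set 'rV[R]_d -> T) : Prop :=
  forall X, kv X -> forall N, nbhs (f X) N ->
    exists2 e : R, 0 < e & forall Y, kv Y -> hdist X Y < e -> N (f Y).

Definition affine_group (R : realType) (d : nat)
    (G : set ('rV[R]_d -> 'rV[R]_d)) : Prop :=
  [/\ (forall g, G g -> exists M : 'M[R]_d, exists b : 'rV[R]_d,
          M \in unitmx /\ g = (fun x => x *m M + b)),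
      G id,
      (forall g h, G g -> G h -> G (g \o h)),
      (forall g, G g -> exists2 h, G h & cancel g h /\ cancel h g) &
      (forall b : 'rV[R]_d, G (fun x => x + b))].

Definition cb_relations (R : realType) (d : nat)
    (G : set ('rV[R]_d -> 'rV[R]_d)) (H : zmodType) (f : set 'rV[R]_d -> H)
    : Prop :=
  (forall B C, kv B -> kv C -> kv (B `|` C) ->
      f (B `|` C) - f B - f C + f (B `&` C) = 0) /\
  (forall g X, G g -> kv X -> f X = f (g @` X)).

(* (A, iota) is CB(V,G) with X |-> [X], characterised by its universal
   property: the quotient of the free Hausdorff topological abelian group on
   K(V) by the closure of the subgroup generated by the relations is the
   universal Hausdorff topological abelian group receiving a continuous map
   from K(V) satisfying the relations. *)
Definition is_CB (R : realType) (d : nat) (G : set ('rV[R]_d -> 'rV[R]_d))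
    (A : topologicalZmodType) (iota : set 'rV[R]_d -> A) : Prop :=
  [/\ hausdorff_space A, kcont iota, cb_relations G iota &
      forall (H : topologicalZmodType), hausdorff_space H ->
      forall f : set 'rV[R]_d -> H, kcont f -> cb_relations G f ->
      exists phi : A -> H,
        let P := fun psi : A -> H =>
          [/\ (forall x y, psi (x + y) = psi x + psi y),
              continuous psi &
              (forall X, kv X -> psi (iota X) = f X)] in
        P phi /\ forall psi, P psi -> psi = phi].

Definition is_dilation (R : realType) (d : nat) (A : topologicalZmodType)
    (iota : set 'rV[R]_d -> A) (D : R -> A -> A) : Prop :=
  [/\ {within [set p : R * A | 0 <= p.1], continuous (fun p => D p.1 p.2)},
      (forall l x y, 0 <= l -> D l (x + y) = D l x + D l y) &
      (forall l X, 0 <= l -> kv X -> D l (iota X) = iota ((fun v => l *: v) @` X))].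

Definition is_dilation_components (R : realType) (d : nat)
    (A : topologicalZmodType) (D : R -> A -> A)
    (rho0 : A -> A) (rho : nat -> R -> A -> A) : Prop :=
  [/\ continuous rho0,
      (forall i, (1 <= i <= d)%N ->
         {within [set p : R * A | 0 <= p.1], continuous (fun p => rho i p.1 p.2)}),
      (forall i, (1 <= i <= d)%N -> forall l m x, 0 <= l -> 0 <= m ->
         rho i (l + m) x = rho i l x + rho i m x) &
      (forall l x, 0 <= l ->
         D l x = rho0 x + \sum_(1 <= i < d.+1) rho i (l ^+ i) x)].

Definition rhoc (R : realType) (A : zmodType) (rho0 : A -> A)
    (rho : nat -> R -> A -> A) (i : nat) (l : R) (x : A) : A :=
  if i == 0%N then rho0 x else rho i l x.

Definition eidem (R : realType) (A : zmodType) (rho0 : A -> A)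
    (rho : nat -> R -> A -> A) (i : nat) (x : A) : A :=
  rhoc rho0 rho i 1 x.

From HB Require Import structures.
From mathcomp Require Import all_boot all_order all_algebra.
From mathcomp Require Import all_classical all_reals all_analysis.
Import Order.TTheory GRing.Theory Num.Theory numFieldNormedType.Exports.
Set Implicit Arguments.
Unset Strict Implicit.
Unset Printing Implicit Defensive.

Local Open Scope ring_scope.
Local Open Scope classical_set_scope.
Local Open Scope convex_scope.

(* The dilation D(l) is additive and continuous, and D(l) D(m) = D(l m), because
   both sides are continuous endomorphisms of CB(V,G) agreeing on the
   generators [X].  An expansion c + \sum_i a_i(l^i) with each a_i additive on
   [0, oo) is unique: subtracting the expansion at 2 l from 2^(k+1) times the
   one at l kills the top term, so by induction all lower coefficients vanish
   (integer division being possible in [0, oo)), and then the top one too.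
   Uniqueness of the expansion of D(l) applied to D(l)(u + v), to
   D(l)(D(m) x) = D(l m) x and then to rho_i(s, D(l) x) and rho_0(D(l) x) shows
   in turn that the rho_i are additive in x, that
   rho_i(s, D(l) x) = rho_i(l^i s, x), and that
   rho_i(s, rho_j(t, x)) = [i = j] rho_i(t s, x), which is the whole claim. *)

Lemma additive_morph0 (U V : zmodType) (f : U -> V) :
  {morph f : u v / u + v} -> f 0 = 0.
Proof. by move=> fD; apply: (addrI (f 0)); rewrite -fD !addr0. Qed.

Lemma additive_morphN (U V : zmodType) (f : U -> V) :
  {morph f : u v / u + v} -> {morph f : u / - u}.
Proof.
by move=> fD u; apply: (addrI (f u)); rewrite -fD !subrr (additive_morph0 fD).
Qed.

Section NonnegAdditive.
Variables (R : realType) (A : zmodType).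

Definition nonneg_additive (f : R -> A) :=
  forall s t, 0 <= s -> 0 <= t -> f (s + t) = f s + f t.

Lemma nonneg_additive0 f : nonneg_additive f -> f 0 = 0.
Proof. by move=> fD; apply: (addrI (f 0)); rewrite -fD ?addr0. Qed.

Lemma nonneg_additiveMn f t n :
  nonneg_additive f -> 0 <= t -> f (t *+ n) = f t *+ n.
Proof.
move=> fD t0; elim: n => [|n IHn]; first by rewrite !mulr0n nonneg_additive0.
by rewrite !mulrS fD ?IHn ?mulrn_wge0.
Qed.

Lemma nonneg_additive_mulrn f n :
  nonneg_additive f -> nonneg_additive (fun t => f t *+ n).
Proof. by move=> fD s t s0 t0; rewrite fD ?mulrnDl. Qed.

Lemma nonneg_additiveB f g :
  nonneg_additive f -> nonneg_additive g -> nonneg_additive (f \- g).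
Proof. by move=> fD gD s t s0 t0; rewrite /= fD ?gD // opprD addrACA. Qed.

Lemma nonneg_additive_eq0 f N : nonneg_additive f -> (0 < N)%N ->
  (forall t, 0 <= t -> f t *+ N = 0) -> forall t, 0 <= t -> f t = 0.
Proof.
move=> fD N0 fN0 t t0.
have -> : t = (t / N%:R) *+ N by rewrite -mulr_natr divfK // pnatr_eq0 -lt0n.
by rewrite nonneg_additiveMn ?fN0 // divr_ge0.
Qed.

Lemma nonneg_additive_exp_natrM f n i l : nonneg_additive f -> 0 <= l ->
  f ((n%:R * l) ^+ i) = f (l ^+ i) *+ (n ^ i)%N.
Proof.
by move=> fD l0; rewrite exprMn -natrX mulr_natl nonneg_additiveMn ?exprn_ge0.
Qed.

Lemma nonneg_additive_sum_double k (a : nat -> R -> A) l :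
  (forall i, (1 <= i <= k.+1)%N -> nonneg_additive (a i)) -> 0 <= l ->
  (\sum_(1 <= i < k.+2) a i (l ^+ i)) *+ (2 ^ k.+1)%N
    - \sum_(1 <= i < k.+2) a i ((2 * l) ^+ i)
  = \sum_(1 <= i < k.+1) a i (l ^+ i) *+ (2 ^ k.+1 - 2 ^ i)%N.
Proof.
move=> aD l0.
have a2l i : (1 <= i <= k.+1)%N -> a i ((2 * l) ^+ i) = a i (l ^+ i) *+ (2 ^ i)%N.
  by move=> ik; apply: nonneg_additive_exp_natrM => //; apply: aD.
rewrite -sumrMnl -sumrB big_nat_recr //= a2l; last by rewrite /= leqnn.
rewrite (subrr (a k.+1 (l ^+ k.+1) *+ (2 ^ k.+1)%N)) addr0.
apply: eq_big_nat => i /andP[i1 ik].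
rewrite a2l; last by rewrite i1 ltnW.
by rewrite mulrnBr // leq_pexp2l // ltnW.
Qed.

Lemma powRVn_expr (t : R) n : 0 <= t -> (t `^ n.+1%:R^-1) ^+ n.+1 = t.
Proof.
by move=> t0; rewrite -powR_mulrn ?powR_ge0 // -powRrM mulVf ?pnatr_eq0 // powRr1.
Qed.

Lemma nonneg_additive_sum_eq0 k (a : nat -> R -> A) :
  (forall i, (1 <= i <= k)%N -> nonneg_additive (a i)) ->
  (forall l, 0 <= l -> \sum_(1 <= i < k.+1) a i (l ^+ i) = 0) ->
  forall i, (1 <= i <= k)%N -> forall t, 0 <= t -> a i t = 0.
Proof.
elim: k a => [|k IHk] a aD a0 i; first by case: i.
pose c j := (2 ^ k.+1 - 2 ^ j)%N.
have lower j : (1 <= j <= k)%N -> forall t, 0 <= t -> a j t = 0.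
  move=> /andP[j1 jk]; apply: (nonneg_additive_eq0 (N := c j)).
  - by apply: aD; rewrite j1 ltnW.
  - by rewrite subn_gt0 ltn_exp2l.
  move=> t t0; apply: (IHk (fun j t => a j t *+ c j)) => //; last by rewrite j1.
    by move=> i' /andP[i1 ik]; apply/nonneg_additive_mulrn/aD; rewrite i1 ltnW.
  move=> l l0; rewrite -nonneg_additive_sum_double //.
  by rewrite a0 // a0 ?mul0rn ?subrr // mulr_ge0.
case/andP=> i1; rewrite leq_eqVlt => /orP[/eqP-> t t0|]; last first.
  by rewrite ltnS => ik; apply: lower; rewrite i1.
rewrite -(powRVn_expr k t0) -[RHS](a0 _ (powR_ge0 t k.+1%:R^-1)).
rewrite big_nat_recr //= big1_seq ?add0r // => j.
by rewrite mem_index_iota => /andP[j1 jk]; rewrite lower ?j1 ?exprn_ge0 ?powR_ge0.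
Qed.

Lemma nonneg_additive_expansion_unique k (c c' : A) (a b : nat -> R -> A) :
  (forall i, (1 <= i <= k)%N -> nonneg_additive (a i)) ->
  (forall i, (1 <= i <= k)%N -> nonneg_additive (b i)) ->
  (forall l, 0 <= l -> c + \sum_(1 <= i < k.+1) a i (l ^+ i) =
                       c' + \sum_(1 <= i < k.+1) b i (l ^+ i)) ->
  c = c' /\ forall i, (1 <= i <= k)%N -> forall t, 0 <= t -> a i t = b i t.
Proof.
move=> aD bD ab.
have sum_at0 f : (forall i, (1 <= i <= k)%N -> nonneg_additive (f i)) ->
    \sum_(1 <= i < k.+1) f i (0 ^+ i) = 0.
  move=> fD; rewrite big1_seq // => i /andP[_]; rewrite mem_index_iota => ik.
  have -> : (0 : R) ^+ i = 0 by rewrite expr0n gtn_eqF //; case/andP: ik.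
  exact: nonneg_additive0 (fD i ik).
have cc' : c = c' by have := ab 0 (lexx _); rewrite !sum_at0 // !addr0.
split=> // i ik t t0; apply/subr0_eq.
apply: (nonneg_additive_sum_eq0 (a := fun i => a i \- b i) _ _ ik t0).
- by move=> j jk; apply: nonneg_additiveB; [apply: aD | apply: bD].
- move=> l l0; rewrite sumrB; apply/eqP; rewrite subr_eq0.
  by apply/eqP/(addrI c); rewrite {2}cc' ab.
Qed.

End NonnegAdditive.

Section DilationComponents.
Variables (R : realType) (A : zmodType) (d : nat) (D : R -> A -> A).
Variables (rho0 : A -> A) (rho : nat -> R -> A -> A).
Hypothesis DD : forall l, 0 <= l -> {morph D l : u v / u + v}.
Hypothesis DM : forall l m x, 0 <= l -> 0 <= m -> D l (D m x) = D (l * m) x.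
Hypothesis rho_nonneg_additive :
  forall i, (1 <= i <= d)%N -> forall x, nonneg_additive (rho i ^~ x).
Hypothesis D_expansion : forall l x, 0 <= l ->
  D l x = rho0 x + \sum_(1 <= i < d.+1) rho i (l ^+ i) x.

Lemma components_additive u v :
  rho0 (u + v) = rho0 u + rho0 v /\
  forall i, (1 <= i <= d)%N -> forall t, 0 <= t ->
    rho i t (u + v) = rho i t u + rho i t v.
Proof.
apply: (nonneg_additive_expansion_unique (k := d)
  (a := fun i t => rho i t (u + v)) (b := fun i t => rho i t u + rho i t v)).
- by move=> i i_in; apply: rho_nonneg_additive.
- by move=> i i_in s t s0 t0; rewrite !rho_nonneg_additive // addrACA.
- by move=> l l0; rewrite -D_expansion // DD // !D_expansion // big_split addrACA.
Qed.

Lemma rho0_additive : {morph rho0 : u v / u + v}.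
Proof. by move=> u v; case: (components_additive u v). Qed.

Lemma rho_additive i t :
  (1 <= i <= d)%N -> 0 <= t -> {morph rho i t : u v / u + v}.
Proof. by move=> i_in t0 u v; case: (components_additive u v) => _; apply. Qed.

Lemma components_dilation l z : 0 <= l ->
  rho0 (D l z) = rho0 z /\
  forall i, (1 <= i <= d)%N -> forall s, 0 <= s ->
    rho i s (D l z) = rho i (l ^+ i * s) z.
Proof.
move=> l0; apply: (nonneg_additive_expansion_unique (k := d)
  (a := fun i s => rho i s (D l z)) (b := fun i s => rho i (l ^+ i * s) z)).
- by move=> i i_in; apply: rho_nonneg_additive.
- move=> i i_in s t s0 t0; have li0 : 0 <= l ^+ i by rewrite exprn_ge0.
  by rewrite mulrDr rho_nonneg_additive // mulr_ge0.
- move=> m m0; rewrite -D_expansion // DM // D_expansion ?mulr_ge0 //.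
  by congr (_ + _); apply: eq_bigr => i _; rewrite exprMn mulrC.
Qed.

Lemma rho0_dilation l z : 0 <= l -> rho0 (D l z) = rho0 z.
Proof. by case/(components_dilation z). Qed.

Lemma rho_dilation i l s z : (1 <= i <= d)%N -> 0 <= l -> 0 <= s ->
  rho i s (D l z) = rho i (l ^+ i * s) z.
Proof. by move=> i_in /(components_dilation z) [_]; apply. Qed.

Lemma components_rho i s z : (1 <= i <= d)%N -> 0 <= s ->
  rho i s (rho0 z) = 0 /\
  forall j, (1 <= j <= d)%N -> forall t, 0 <= t ->
    rho i s (rho j t z) = if j == i then rho i (t * s) z else 0.
Proof.
move=> i_in s0; apply: (nonneg_additive_expansion_unique (k := d)
  (a := fun j t => rho i s (rho j t z))
  (b := fun j t => if j == i then rho i (t * s) z else 0)).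
- by move=> j j_in u v u0 v0; rewrite rho_nonneg_additive // rho_additive.
- move=> j j_in u v u0 v0; case: ifP => _; last by rewrite addr0.
  by rewrite mulrDl rho_nonneg_additive ?mulr_ge0.
- move=> l l0; rewrite -big_mkcond big_nat1_eq ltnS i_in add0r.
  have rD := rho_additive i_in s0.
  rewrite -rho_dilation // D_expansion // rD.
  by rewrite (big_morph _ rD (additive_morph0 rD)).
Qed.

Lemma components_rho0 z :
  rho0 (rho0 z) = rho0 z /\
  forall j, (1 <= j <= d)%N -> forall t, 0 <= t -> rho0 (rho j t z) = 0.
Proof.
apply: (nonneg_additive_expansion_unique (k := d)
  (a := fun j t => rho0 (rho j t z)) (b := fun _ _ => 0)).
- by move=> j j_in u v u0 v0; rewrite rho_nonneg_additive // rho0_additive.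
- by move=> j j_in u v u0 v0; rewrite addr0.
- move=> l l0; rewrite [in RHS]big1 // addr0 -[RHS](rho0_dilation z l0).
  have r0D := rho0_additive.
  by rewrite D_expansion // r0D (big_morph _ r0D (additive_morph0 r0D)).
Qed.

Lemma rho_rho0 i s z : (1 <= i <= d)%N -> 0 <= s -> rho i s (rho0 z) = 0.
Proof. by move=> i_in s0; case: (components_rho z i_in s0). Qed.

Lemma rho_rho i j s t z :
  (1 <= i <= d)%N -> (1 <= j <= d)%N -> 0 <= s -> 0 <= t ->
  rho i s (rho j t z) = if j == i then rho i (t * s) z else 0.
Proof.
by move=> i_in j_in s0 t0; case: (components_rho z i_in s0) => _; apply.
Qed.

Lemma rho0_rho0 z : rho0 (rho0 z) = rho0 z.
Proof. by case: (components_rho0 z). Qed.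

Lemma rho0_rho j t z : (1 <= j <= d)%N -> 0 <= t -> rho0 (rho j t z) = 0.
Proof. by move=> j_in t0; case: (components_rho0 z) => _; apply. Qed.

Lemma rhoc_comp i j l m x : (i <= d)%N -> (j <= d)%N -> 0 <= l -> 0 <= m ->
  rhoc rho0 rho i l (rhoc rho0 rho j m x) =
    if i == j then rhoc rho0 rho i (l * m) x else 0.
Proof.
move=> i_in j_in l0 m0; rewrite /rhoc.
case: i i_in => [|i] i_in; case: j j_in => [|j] j_in /=.
- exact: rho0_rho0.
- exact: rho0_rho.
- exact: rho_rho0.
by rewrite rho_rho // eqSS eq_sym mulrC.
Qed.

End DilationComponents.

Lemma kv_scale (R : realType) (d : nat) (X : set 'rV[R]_d) (m : R) :
  kv X -> kv ((fun v => m *: v) @` X).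
Proof.
case=> [[x Xx] [cX vX]]; split; first by exists (m *: x); exists x.
split.
  apply: continuous_compact => //; apply: continuous_subspaceT.
  exact: scaler_continuous.
move=> u v p; rewrite !inE => -[a Xa <-] [b Xb <-].
exists ((a : convex_lmodType _) <| p |> b).
  by rewrite -inE; apply: vX; rewrite inE.
rewrite [RHS](_ : _ = p%:num *: (m *: a) + (1 - p%:num) *: (m *: b)) //=.
by rewrite scalerDr !scalerA !(mulrC m).
Qed.

Lemma kcont_comp (R : realType) (d : nat) (T U : topologicalType)
    (f : T -> U) (g : set 'rV[R]_d -> T) :
  continuous f -> kcont g -> kcont (f \o g).
Proof. by move=> f_cont g_cont X kX N /f_cont; apply: g_cont. Qed.

Lemma cb_relations_comp (R : realType) (d : nat) (G : set ('rV[R]_d -> 'rV[R]_d))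
    (H K : zmodType) (f : H -> K) (g : set 'rV[R]_d -> H) :
  {morph f : u v / u + v} -> cb_relations G g -> cb_relations G (f \o g).
Proof.
move=> fD [g_incl_excl g_inv]; split=> [B C kB kC kBC | h X Gh kX] /=.
  by rewrite -!(additive_morphN fD) -!fD g_incl_excl // (additive_morph0 fD).
by rewrite -g_inv.
Qed.

Lemma is_CB_hom_eq (R : realType) (d : nat) (G : set ('rV[R]_d -> 'rV[R]_d))
    (A H : topologicalZmodType) (iota : set 'rV[R]_d -> A) (phi psi : A -> H) :
  is_CB G iota -> hausdorff_space H ->
  {morph phi : u v / u + v} -> {morph psi : u v / u + v} ->
  continuous phi -> continuous psi ->
  (forall X, kv X -> phi (iota X) = psi (iota X)) -> phi = psi.
Proof.
case=> _ iota_cont iota_rel univ H_T2 phiD psiD phi_cont psi_cont phi_psi.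
have [chi [_ chi_unique]] := univ H H_T2 (psi \o iota)
  (kcont_comp psi_cont iota_cont) (cb_relations_comp psiD iota_rel).
have eq_chi xi : {morph xi : u v / u + v} -> continuous xi ->
    (forall X, kv X -> xi (iota X) = psi (iota X)) -> xi = chi.
  by move=> xiD xi_cont xi_iota; apply: chi_unique; split.
by rewrite (eq_chi phi) // (eq_chi psi).
Qed.

Section Dilation.
Variables (R : realType) (d : nat) (G : set ('rV[R]_d -> 'rV[R]_d)).
Variables (A : topologicalZmodType) (iota : set 'rV[R]_d -> A) (D : R -> A -> A).
Hypothesis D_dilation : is_dilation iota D.

Lemma dilation_continuous l : 0 <= l -> continuous (D l).
Proof.
case: D_dilation => D_cont _ _ l0 x; pose S := [set p : R * A | 0 <= p.1].
have D_within : (fun p => D p.1 p.2) @ within S (nbhs (l, x)) --> D l x.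
  by rewrite (@nbhs_subspace_in _ S (l, x)) //; exact: (D_cont (l, x)).
have pair_within : (fun y => (l, y)) @ x --> within S (nbhs (l, x)).
  move=> P /(cvg_pair (cvg_cst l) cvg_id) SP.
  by apply: filter_app SP; apply: nearW => y; apply.
exact: (cvg_comp _ _ pair_within D_within).
Qed.

Lemma dilation_additive l : 0 <= l -> {morph D l : u v / u + v}.
Proof. by case: D_dilation => _ DD _ l0 u v; apply: DD. Qed.

Lemma dilationM l m x : is_CB G iota -> 0 <= l -> 0 <= m ->
  D l (D m x) = D (l * m) x.
Proof.
move=> CB l0 m0; have lm0 : 0 <= l * m by rewrite mulr_ge0.
have [A_T2 _ _ _] := CB; case: D_dilation => _ _ D_iota.
suff DlDm : D l \o D m = D (l * m) by rewrite -DlDm.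
apply: (is_CB_hom_eq CB A_T2).
- by move=> u v /=; rewrite !dilation_additive.
- exact: dilation_additive.
- by move=> u; apply: continuous_comp; apply: dilation_continuous.
- exact: dilation_continuous.
move=> X kX /=; have kmX := kv_scale m kX.
rewrite !D_iota //; congr iota.
by rewrite image_comp; apply: eq_imagel => v _ /=; rewrite scalerA.
Qed.

End Dilation.

Theorem lemma6p8 (R : realType) (d : nat) (G : set ('rV[R]_d -> 'rV[R]_d))
    (A : topologicalZmodType) (iota : set 'rV[R]_d -> A)
    (D : R -> A -> A) (rho0 : A -> A) (rho : nat -> R -> A -> A) :
  affine_group G ->
  is_CB G iota ->
  is_dilation iota D ->
  is_dilation_components d D rho0 rho ->
  forall (i j : nat), (i <= d)%N -> (j <= d)%N ->
  forall (l : R) (x : A), 0 <= l ->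
    [/\ eidem rho0 rho i (rhoc rho0 rho j l x) = rhoc rho0 rho i l (eidem rho0 rho j x),
        rhoc rho0 rho i l (eidem rho0 rho j x) =
          (if i == j then rhoc rho0 rho i l x else 0) &
        exists y : A, rhoc rho0 rho i l x = eidem rho0 rho i y].
Proof.
(* Only the universal property of CB(V,G) is used, not the affinity of G. *)
move=> _ CB D_dil [_ _ rho_add D_exp] i j i_in j_in l x l0.
have comp := rhoc_comp (dilation_additive D_dil)
  (fun l m x => dilationM D_dil x CB)
  (fun i i_in x s t => rho_add i i_in s t x) D_exp.
rewrite /eidem !comp ?ler01 // mul1r mulr1; split=> //.
by exists (rhoc rho0 rho i l x); rewrite comp ?ler01 // eqxx mul1r.
Qed.
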